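(* Let $k\ge 1$, let $z_1,\dots,z_k\in\mathbb{C}$ be pairwise distinct with $|z_j|\le 1$ and $z_j\neq 1$ for $j=1,\dots,k$, and let $n\ge 1$ and $n_1,\dots,n_k\ge 1$ be integers. Let $$p(z)=(z-1)^n\prod_{j=1}^{k}(z-z_j)^{n_j},\quad z\in\mathbb{C},$$ and set $m=n+\sum_{j=1}^k n_j$. Then there exists $\zeta\neq 1$ such that $p'(\zeta)=0$ and $$\Big|\zeta-\frac{m-n}{m+(k-1)n}\Big|\le \frac{kn}{m+(k-1)n}.$$ *)

(* Complex numbers are modelled as R[i] = complex R
   (mathcomp-real-closed) for R : realType (MathComp-Analysis reals);
   with R the classical reals this is exactly C. *)
From HB Require Import structures.
From mathcomp Require Import all_boot all_order all_algebra.
From mathcomp Require Import complex.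
From mathcomp Require Import reals.
Set Implicit Arguments. Unset Strict Implicit. Unset Printing Implicit Defensive.
Import Order.TTheory GRing.Theory Num.Theory.
Local Open Scope ring_scope.

Definition pol (R : realType) (k n : nat) (z : 'I_k -> R[i]) (nn : 'I_k -> nat)
  : {poly R[i]} :=
  ('X - 1) ^+ n * \prod_(j < k) ('X - (z j)%:P) ^+ (nn j).

From HB Require Import structures.
From mathcomp Require Import all_boot all_order all_algebra.
From mathcomp Require Import complex.
From mathcomp Require Import reals.
From mathcomp Require Import ring.
Import Order.TTheory GRing.Theory Num.Theory.
Local Open Scope ring_scope.

(* Substitute u = 1 / (1 - zeta) and v_j = 1 / (1 - z_j).  A point zeta <> 1, z_j
   is critical for p iff  sum_j n_j v_j / (u - v_j) = n,  and clearing denominators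
   turns this into a polynomial equation of degree k in u whose roots sum to
   sum_j v_j + (sum_j n_j v_j) / n.  As |z_j| <= 1 forces Re v_j >= 1/2, the roots
   have average real part at least (k n + sum_j n_j) / (2 k n) = 1 / (2 r), with
   r = k n / (m + (k - 1) n), so one of them has Re u >= 1 / (2 r).  That
   inequality says exactly that 1/u lies in the closed disc of centre r and radius
   r, i.e. |zeta - (1 - r)| <= r. *)

Lemma exists_ge_average (R : realDomainType) (T : eqType) (s : seq T) (f : T -> R) (a : R) :
  s != [::] -> (size s)%:R * a <= \sum_(x <- s) f x -> exists2 x, x \in s & a <= f x.
Proof.
move=> s_neq0 le_sum; apply/hasP; apply: contraLR le_sum => /hasPn lt_fa; rewrite -ltNge.
elim: s s_neq0 lt_fa => [//|b [|c s] IHs] _ lt_fa.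
  by rewrite big_seq1 mul1r ltNge lt_fa ?mem_head.
rewrite big_cons [size _]/= mulrS mulrDl mul1r ltrD ?IHs // ?ltNge ?lt_fa ?mem_head //.
by move=> x s_x; rewrite lt_fa // in_cons s_x orbT.
Qed.

Lemma horner_deriv_prod (F : fieldType) (I : Type) (s : seq I) (G : I -> {poly F}) (w : F) :
    (forall i, (G i).[w] != 0) ->
  (\prod_(i <- s) G i)^`().[w] =
    (\prod_(i <- s) G i).[w] * \sum_(i <- s) (G i)^`().[w] / (G i).[w].
Proof.
move=> G_neq0; elim: s => [|i s IHs]; first by rewrite !big_nil derivC horner0 mulr0.
rewrite !big_cons derivM hornerD !hornerM IHs mulrDr.
congr (_ + _); last by rewrite mulrA.
by field; exact: G_neq0.
Qed.

Lemma horner_deriv_XsubC_exp (F : fieldType) (a w : F) (e : nat) : w != a ->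
  (('X - a%:P) ^+ e)^`().[w] = (('X - a%:P) ^+ e).[w] * (e%:R / (w - a)).
Proof.
move=> w_neq_a; have wa0 : w - a != 0 by rewrite subr_eq0.
rewrite deriv_exp derivXsubC mul1r hornerMn !horner_exp hornerXsubC.
case: e => [|e]; first by rewrite mulr0n mul0r mulr0.
by rewrite exprS /= -mulr_natr; field.
Qed.

Section PartialFractions.
Context {F : fieldType} {k : nat} (a : F) (v c : 'I_k -> F).

Local Notation Pv := (\prod_(i < k) ('X - (v i)%:P)).
Local Notation Qv j := (\prod_(i < k | i != j) ('X - (v i)%:P)).

Definition pfrac_poly : {poly F} := a *: Pv - \sum_(j < k) c j *: Qv j.

Lemma horner_pfrac_poly x : pfrac_poly.[x] =
  a * \prod_(i < k) (x - v i) - \sum_(j < k) c j * \prod_(i < k | i != j) (x - v i).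
Proof.
rewrite hornerD hornerN hornerZ horner_prod horner_sum.
under eq_bigr do rewrite hornerXsubC.
congr (_ - _); apply: eq_bigr => j _; rewrite hornerZ horner_prod.
by under eq_bigr do rewrite hornerXsubC.
Qed.

Lemma horner_pfrac_poly_off_nodes x : (forall j, x != v j) ->
  pfrac_poly.[x] = \prod_(i < k) (x - v i) * (a - \sum_(j < k) c j / (x - v j)).
Proof.
move=> x_neq_v; have xv0 j : x - v j != 0 by rewrite subr_eq0.
rewrite horner_pfrac_poly mulrBr mulr_sumr mulrC; congr (_ - _); apply: eq_bigr => j _.
by rewrite [in RHS](bigD1 j) //=; field; exact: xv0.
Qed.

Lemma horner_pfrac_poly_node j :
  pfrac_poly.[v j] = - (c j * \prod_(i < k | i != j) (v j - v i)).
Proof.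
rewrite horner_pfrac_poly (bigD1 j) //= subrr mul0r mulr0 sub0r.
rewrite [\sum_(_ < k) _](bigD1 j) //= [X in _ + X]big1 ?addr0 //.
by move=> l l_neq_j; rewrite (bigD1 j) 1?eq_sym //= subrr mul0r mulr0.
Qed.

Lemma size_prod_XsubC_nodes : size Pv = k.+1.
Proof. by rewrite size_prod_XsubC [index_enum _]unlock -enumT size_enum_ord. Qed.

Lemma size_prod_XsubC_other_nodes j : size (Qv j) = k.
Proof.
rewrite -big_filter size_prod_XsubC; have [e _ _ [_ ->]] := big_enumP.
rewrite -[[pred i | i != j]]/(predC1 j) cardC1 card_ord prednK //.
exact: leq_ltn_trans (ltn_ord j).
Qed.

Lemma size_sum_scale_other_nodes : (size (\sum_(j < k) c j *: Qv j)%R <= k)%N.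
Proof.
apply: leq_trans (size_sum _ _ _) _; apply/bigmax_leqP => j _.
by rewrite (leq_trans (size_scale_leq _ _)) ?size_prod_XsubC_other_nodes.
Qed.

Lemma coef_pfrac_poly_subleading : (0 < k)%N ->
  pfrac_poly`_k.-1 = - (a * \sum_(j < k) v j + \sum_(j < k) c j).
Proof.
move=> k_gt0; rewrite coefB coefZ coef_sum opprD -mulrN; congr (_ * _ - _).
  have size_vs : size [seq v i | i <- index_enum 'I_k] = k.
    by rewrite size_map [index_enum _]unlock -enumT size_enum_ord.
  rewrite -(big_map v xpredT (fun x => 'X - x%:P)) -[k in k.-1]size_vs.
  by rewrite coefPn_prod_XsubC ?big_map // size_vs -lt0n.
apply: eq_bigr => j _; rewrite coefZ -[k in k.-1](size_prod_XsubC_other_nodes j).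
by rewrite -lead_coefE lead_coef_prod_XsubC mulr1.
Qed.

Hypothesis a_neq0 : a != 0.

Lemma size_pfrac_poly : size pfrac_poly = k.+1.
Proof.
rewrite size_polyDl size_scale // size_prod_XsubC_nodes // size_polyN ltnS.
exact: size_sum_scale_other_nodes.
Qed.

Lemma lead_coef_pfrac_poly : lead_coef pfrac_poly = a.
Proof.
rewrite lead_coefDl ?size_scale ?size_prod_XsubC_nodes ?size_polyN ?ltnS //.
  by rewrite lead_coefZ lead_coef_prod_XsubC mulr1.
exact: size_sum_scale_other_nodes.
Qed.

End PartialFractions.

Lemma pfrac_roots {F : closedFieldType} {k : nat} {a : F} {v c : 'I_k -> F} :
    a != 0 -> injective v -> (forall j, c j != 0) ->
  exists us : seq F, [/\ size us = k,
    a * \sum_(u <- us) u = a * \sum_(j < k) v j + \sum_(j < k) c j,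
    forall u j, u \in us -> u != v j
    & forall u, u \in us -> \sum_(j < k) c j / (u - v j) = a].
Proof.
case: k v c => [|k] v c a_neq0 v_inj c_neq0.
  by exists [::]; split; rewrite // !big_nil !big_ord0 mulr0 addr0.
have [us def_s] := closed_field_poly_normal (pfrac_poly a v c).
rewrite lead_coef_pfrac_poly // in def_s.
have size_us : size us = k.+1.
  by have := size_pfrac_poly a v c a_neq0; rewrite def_s size_scale // size_prod_XsubC => -[].
have s_us u : u \in us -> (pfrac_poly a v c).[u] = 0.
  move=> us_u; rewrite def_s hornerZ; apply/eqP.
  by rewrite mulf_eq0 -rootE root_prod_XsubC us_u orbT.
have us_neq_v u j : u \in us -> u != v j.
  move/s_us; apply: contra_eqN => /eqP->; rewrite horner_pfrac_poly_node oppr_eq0 mulf_neq0 //.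
  by apply/prodf_neq0 => i i_neq_j; rewrite subr_eq0 (inj_eq v_inj) eq_sym.
exists us; split=> //.
  apply: oppr_inj; rewrite -(coef_pfrac_poly_subleading a v c) // def_s coefZ.
  by rewrite -[k in k.-1]size_us coefPn_prod_XsubC ?size_us // mulrN.
move=> u us_u; have prod_neq0 : \prod_(i < k.+1) (u - v i) != 0.
  by apply/prodf_neq0 => i _; rewrite subr_eq0 us_neq_v.
move/eqP: (s_us u us_u); rewrite horner_pfrac_poly_off_nodes => [|j]; last exact: us_neq_v.
by rewrite mulf_eq0 (negPf prod_neq0) subr_eq0 => /eqP->.
Qed.

Section RealClosedComplex.
Local Open Scope complex_scope.
Context {R : rcfType}.

Lemma norm_sub_inv_le (r : R) (u : R[i]) : 0 < r -> u != 0 ->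
  (`|r%:C - u^-1| <= r%:C) = (1 <= 2 * r * complex.Re u).
Proof.
case: u => x y hr /= u0.
have d0 : 0 < x ^+ 2 + y ^+ 2.
  rewrite lt_def addr_ge0 ?sqr_ge0 // andbT paddr_eq0 ?sqr_ge0 // !sqrf_eq0.
  by apply: contra u0 => /andP[/eqP-> /eqP->].
set d := x ^+ 2 + y ^+ 2 in d0 *.
rewrite normc_def lecR /= -/d -{2}(ger0_norm (ltW hr)) -sqrtr_sqr ler_sqrt ?sqr_ge0 //.
have -> : (r - x / d) ^+ 2 + (0 - - (y / d)) ^+ 2 = r ^+ 2 - (2 * r * x - 1) / d.
  by rewrite /d; field; rewrite -/d lt0r_neq0.
by rewrite gerDl oppr_le0 pmulr_lge0 ?invr_gt0 // subr_ge0.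
Qed.

Lemma Re_inv_1B_ge_half {z : R[i]} : `|z| <= 1 -> z != 1 -> 1 <= 2 * complex.Re (1 - z)^-1.
Proof.
move=> z_le1 z_neq1; have u0 : (1 - z)^-1 != 0 by rewrite invr_eq0 subr_eq0 eq_sym.
by rewrite -[2]mulr1 -norm_sub_inv_le ?ltr01 // invrK subKr.
Qed.

Lemma Re_weighted_sum_nodes_ge {k : nat} (n : nat) {v : 'I_k -> R[i]} (nn : 'I_k -> nat) :
    (forall j, 1 <= 2 * complex.Re (v j)) ->
  (k * n + \sum_(j < k) nn j)%:R <=
    2 * complex.Re (n%:R * \sum_(j < k) v j + \sum_(j < k) (nn j)%:R * v j).
Proof.
move=> Re_v; rewrite mulr_sumr -big_split raddf_sum mulr_sumr /=.
have -> : (k * n = \sum_(j < k) n)%N by rewrite sum_nat_const card_ord mulnC.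
rewrite -big_split natr_sum; apply: ler_sum => j _.
rewrite -mulrDl -natrD [X in complex.Re X]mulr_natl raddfMn.
by rewrite mulrnAr lerMn2r Re_v orbT.
Qed.

Lemma exists_root_Re_ge {k : nat} (n : nat) {v : 'I_k -> R[i]} (nn : 'I_k -> nat)
    {us : seq R[i]} : (0 < k)%N -> (0 < n)%N -> (forall j, 1 <= 2 * complex.Re (v j)) ->
    size us = k ->
    n%:R * \sum_(u <- us) u = n%:R * \sum_(j < k) v j + \sum_(j < k) (nn j)%:R * v j ->
  exists2 u, u \in us &
    1 <= 2 * ((k * n)%:R / (k * n + \sum_(j < k) nn j)%:R) * complex.Re u.
Proof.
move=> k_gt0 n_gt0 Re_v size_us sum_us.
apply: exists_ge_average; first by rewrite -size_eq0 size_us -lt0n.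
have Re_natrM (x : R[i]) : complex.Re (n%:R * x) = n%:R * complex.Re x.
  by rewrite !mulr_natl raddfMn.
have Re_sum : \sum_(u <- us) complex.Re u = complex.Re (\sum_(u <- us) u) by rewrite raddf_sum.
have := Re_weighted_sum_nodes_ge n nn Re_v.
rewrite -sum_us Re_natrM -mulr_sumr Re_sum size_us mulr1.
set D := (k * n + _)%N; set x := complex.Re _ => le_D.
have D_neq0 : D%:R != 0 :> R by rewrite pnatr_eq0 -lt0n addn_gt0 muln_gt0 k_gt0 n_gt0.
have -> : 2 * ((k * n)%:R / D%:R) * x = k%:R / D%:R * (2 * (n%:R * x)).
  by rewrite natrM; field.
by apply: le_trans (ler_wpM2l _ le_D); rewrite ?divfK // divr_ge0.
Qed.
End RealClosedComplex.

Lemma horner_deriv_pol (R : realType) (k n : nat) (z : 'I_k -> R[i]) (nn : 'I_k -> nat)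
    (w : R[i]) : w != 1 -> (forall j, w != z j) ->
  (pol n z nn)^`().[w] =
    (pol n z nn).[w] * (n%:R / (w - 1) + \sum_(j < k) (nn j)%:R / (w - z j)).
Proof.
move=> w_neq1 w_neq_z; pose G j := ('X - (z j)%:P) ^+ nn j.
have G_neq0 j : (G j).[w] != 0 by rewrite horner_exp hornerXsubC expf_neq0 ?subr_eq0.
rewrite /pol -[in 'X - 1]polyC1 derivM hornerD !hornerM horner_deriv_XsubC_exp //.
rewrite horner_deriv_prod; last exact: G_neq0.
rewrite (eq_bigr (fun j => (nn j)%:R / (w - z j))); first by rewrite mulrDr mulrAC !mulrA.
by move=> j _; rewrite horner_deriv_XsubC_exp // mulrC (mulKf (G_neq0 j)).
Qed.

Lemma root_deriv_pol_1BV (R : realType) (k n : nat) (z : 'I_k -> R[i]) (nn : 'I_k -> nat)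
    (u : R[i]) : (forall j, z j != 1) -> u != 0 -> (forall j, u != (1 - z j)^-1) ->
  \sum_(j < k) (nn j)%:R * (1 - z j)^-1 / (u - (1 - z j)^-1) = n%:R ->
  root (pol n z nn)^`() (1 - u^-1).
Proof.
move=> z_neq1 u_neq0 u_neq_v crit.
have sub1 : 1 - u^-1 - 1 = - u^-1 by ring.
have subz j : 1 - u^-1 - z j = (1 - z j) - u^-1 by ring.
have w_neq1 : 1 - u^-1 != 1 by rewrite -subr_eq0 sub1 oppr_eq0 invr_eq0.
have w_neq_z j : 1 - u^-1 != z j.
  by rewrite -subr_eq0 subz subr_eq0 -[1 - z j]invrK (inj_eq (@invr_inj _)) eq_sym.
rewrite rootE horner_deriv_pol // sub1 -crit mulr_suml -big_split big1 ?mulr0 //=.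
move=> j _; rewrite subz; have := u_neq_v j; rewrite -subr_eq0.
have : 1 - z j != 0 by rewrite subr_eq0 eq_sym.
move: (1 - z j) => y y_neq0 uy.
have yu : y * u - 1 != 0 by rewrite -(mulfV y_neq0) -mulrBr mulf_neq0.
by field; rewrite u_neq0 yu y_neq0.
Qed.

Theorem theorem1 (R : realType) (k n : nat) (z : 'I_k -> R[i]) (nn : 'I_k -> nat)
  (hk : (1 <= k)%N) (hn : (1 <= n)%N) (hnn : forall j, (1 <= nn j)%N)
  (hinj : injective z) (hz1 : forall j, `|z j| <= 1) (hzne : forall j, z j != 1) :
  let m := (n + \sum_(j < k) nn j)%N in
  exists zeta : R[i], zeta != 1 /\ (pol n z nn)^`().[zeta] = 0 /\
    `|zeta - (m - n)%N%:R / (m + (k - 1) * n)%N%:R| <= (k * n)%N%:R / (m + (k - 1) * n)%N%:R.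
Proof.
move=> m; set N := (\sum_(j < k) nn j)%N.
have -> : (m - n = N)%N by rewrite /m addKn.
have -> : (m + (k - 1) * n = k * n + N)%N by rewrite /m -/N addnAC -mulSn subn1 prednK.
pose v j := (1 - z j)^-1.
have v_inj : injective v by move=> i j /invr_inj/addrI/oppr_inj/hinj.
have Re_v j : 1 <= 2 * complex.Re (v j) := Re_inv_1B_ge_half (hz1 j) (hzne j).
have n_neq0 : n%:R != 0 :> R[i] by rewrite pnatr_eq0 -lt0n.
have c_neq0 j : (nn j)%:R * v j != 0.
  by rewrite mulf_neq0 ?pnatr_eq0 -?lt0n // invr_eq0 subr_eq0 eq_sym.
have [us [size_us sum_us us_neq_v crit_us]] := pfrac_roots n_neq0 v_inj c_neq0.
pose r : R := (k * n)%:R / (k * n + N)%:R.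
have [u us_u Re_u] : exists2 u, u \in us & 1 <= 2 * r * complex.Re u :=
  exists_root_Re_ge n nn hk hn Re_v size_us sum_us.
have D_gt0 : (0 < k * n + N)%N by rewrite addn_gt0 muln_gt0 hk hn.
have r_gt0 : 0 < r by rewrite divr_gt0 ?ltr0n ?muln_gt0 ?hk ?hn.
have u_neq0 : u != 0.
  by apply: contraTneq Re_u => ->; rewrite (_ : complex.Re 0 = 0) // mulr0 ler10.
have r_C : (r%:C)%C = (k * n)%:R / (k * n + N)%:R :> R[i].
  by rewrite /r rmorphM fmorphV /= !rmorph_nat.
have N_D : N%:R / (k * n + N)%:R = 1 - (r%:C)%C :> R[i].
  by rewrite r_C natrD; field; rewrite -?natrM -natrD pnatr_eq0 -lt0n.
exists (1 - u^-1); split; [|split].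
- by rewrite -subr_eq0 addrAC subrr add0r oppr_eq0 invr_eq0.
- by apply/rootP/root_deriv_pol_1BV => // [j|]; [exact: us_neq_v | exact: crit_us].
rewrite N_D -r_C (_ : 1 - u^-1 - (1 - (r%:C)%C) = (r%:C)%C - u^-1); last by ring.
by rewrite norm_sub_inv_le.
Qed.
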